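(* Let $S$ be a semigroup with finite $\mathcal{R}$-height, and let $B$ be a bi-ideal of $S$. Then $\mathrm{H}_{\mathcal{R}}(B)\leq 3\,\mathrm{H}_{\mathcal{R}}(S)-1$.
   Context: For a semigroup $S$, $S^1$ denotes $S$ with an identity adjoined if necessary. Green's preorder: $a\leq_{\mathcal{R}} b$ iff $aS^1\subseteq bS^1$; $\mathcal{R}$ is the associated equivalence; the $\mathcal{R}$-height $\mathrm{H}_{\mathcal{R}}$ of a semigroup is the supremum of the cardinalities of chains in its poset of $\mathcal{R}$-classes. A bi-ideal of $S$ is a non-empty subset $B$ with $BS^1B\subseteq B$; $\mathrm{H}_{\mathcal{R}}(B)$ is computed in the semigroup $B$ itself. *)

From Stdlib Require Import Arith.

(* A subsemigroup (used for the bi-ideal B and for S itself)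
   is given by a predicate P : T -> Prop closed under mul; Green's relations
   are then computed inside the semigroup P. *)

Definition assoc {T : Type} (mul : T -> T -> T) : Prop :=
  forall x y z, mul x (mul y z) = mul (mul x y) z.

Definition subsemigroup {T : Type} (mul : T -> T -> T) (P : T -> Prop) : Prop :=
  forall x y, P x -> P y -> P (mul x y).

Definition bi_ideal {T : Type} (mul : T -> T -> T) (B : T -> Prop) : Prop :=
  (exists b, B b) /\
  (forall b b', B b -> B b' -> B (mul b b')) /\
  (forall b s b', B b -> B b' -> B (mul (mul b s) b')).

Definition Rle {T : Type} (mul : T -> T -> T) (P : T -> Prop) (a b : T) : Prop :=
  a = b \/ exists c, P c /\ a = mul b c.

Definition Rlt {T : Type} (mul : T -> T -> T) (P : T -> Prop) (a b : T) : Prop :=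
  Rle mul P a b /\ ~ Rle mul P b a.

(* A chain of k R-classes of P, represented by elements f 0, ..., f (k-1)
   of P whose R-classes are strictly decreasing. *)
Definition R_chain {T : Type} (mul : T -> T -> T) (P : T -> Prop)
  (k : nat) (f : nat -> T) : Prop :=
  (forall i, i < k -> P (f i)) /\
  (forall i, S i < k -> Rlt mul P (f (S i)) (f i)).

Definition R_height_le {T : Type} (mul : T -> T -> T) (P : T -> Prop) (n : nat) : Prop :=
  forall k f, R_chain mul P k f -> k <= n.

Definition R_height {T : Type} (mul : T -> T -> T) (P : T -> Prop) (n : nat) : Prop :=
  R_height_le mul P n /\ exists f, R_chain mul P n f.

From Stdlib Require Import Arith Lia.

(* If [b = a u] with [u] in [B] and [c <_B b], then [c x] lies strictly
   R-below [a] in [S] for every [x] in [B]: otherwise [a] is in [c x S^1], so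
   [b = a u] is in [c x S^1 u], which lies in [c B] because [B] is a bi-ideal.
   Along a chain [f] in [B] this makes [f (3i+3)] strictly R-below [f (3i)]
   in [S], and also [f (3i+2) u] when [f (3i+1) = f (3i) u].  So a chain of
   length [3n] in [B] yields the chain [f 0, f 3, ..., f (3n-3), f (3n-1) u]
   of length [n + 1] in [S]. *)

Section RChains.

Variables (T : Type) (mul : T -> T -> T) (Hassoc : assoc mul).

Local Notation top := (fun _ : T => True).

Lemma Rle_trans (P : T -> Prop) (HP : subsemigroup mul P) a b c :
  Rle mul P a b -> Rle mul P b c -> Rle mul P a c.
Proof.
  intros Hab [-> | [y [Hy ->]]]; [exact Hab |].
  destruct Hab as [-> | [x [Hx ->]]]; right.
  - exists y; auto.
  - exists (mul y x); split; auto.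
Qed.

Lemma Rle_mulr (P : T -> Prop) a y : P y -> Rle mul P (mul a y) a.
Proof. intros Hy; right; exists y; auto. Qed.

Lemma Rle_sub (P Q : T -> Prop) a b :
  (forall x, P x -> Q x) -> Rle mul P a b -> Rle mul Q a b.
Proof. intros HPQ [-> | [x [Hx ->]]]; [left | right; exists x]; auto. Qed.

Lemma Rlt_mulr_inv (P : T -> Prop) a b :
  Rlt mul P b a -> exists u, P u /\ b = mul a u.
Proof.
  intros [[-> | Hb] Hn]; [exfalso; apply Hn; left |]; auto.
Qed.

Lemma R_chain_prefix (P : T -> Prop) k k' f :
  k <= k' -> R_chain mul P k' f -> R_chain mul P k f.
Proof. intros Hk [Hin Hlt]; split; intros i Hi; [apply Hin | apply Hlt]; lia. Qed.

Lemma R_chain_snoc (P : T -> Prop) m g z :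
  R_chain mul P (S m) g -> P z -> Rlt mul P z (g m) ->
  R_chain mul P (S (S m)) (fun i => if i =? S m then z else g i).
Proof.
  intros [Hin Hlt] Hz Hzg; split.
  - intros i Hi; destruct (Nat.eqb_spec i (S m)); [| apply Hin; lia]; auto.
  - intros i Hi; destruct (Nat.eqb_spec (S i) (S m)) as [Ei | Ei].
    + injection Ei as ->; rewrite (proj2 (Nat.eqb_neq m (S m))); auto.
    + rewrite (proj2 (Nat.eqb_neq i (S m))) by lia; apply Hlt; lia.
Qed.

Variables (B : T -> Prop) (HB : bi_ideal mul B).

Lemma Rle_bi_ideal_mul a c x u :
  B x -> B u -> Rle mul top a (mul c x) -> Rle mul B (mul a u) c.
Proof.
  destruct HB as [_ [HBmul HBsandwich]].
  intros Hx Hu [-> | [w [_ ->]]]; right.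
  - exists (mul x u); split; auto; rewrite Hassoc; reflexivity.
  - exists (mul (mul x w) u); split; auto; rewrite !Hassoc; reflexivity.
Qed.

Lemma Rlt_bi_ideal_mul a c x u :
  B x -> B u -> Rlt mul B c (mul a u) -> Rlt mul top (mul c x) a.
Proof.
  intros Hx Hu [Hc Hn].
  assert (Htop : subsemigroup mul top) by (intros ? ? ? ?; exact I).
  split.
  - apply (Rle_trans _ Htop _ c); [apply Rle_mulr; exact I |].
    apply (Rle_trans _ Htop _ (mul a u)); [| apply Rle_mulr; exact I].
    exact (Rle_sub B top _ _ (fun _ _ => I) Hc).
  - intros Ha; apply Hn; exact (Rle_bi_ideal_mul a c x u Hx Hu Ha).
Qed.

Lemma Rlt_bi_ideal_skip3 a b c d :
  Rlt mul B b a -> Rlt mul B c b -> Rlt mul B d c -> Rlt mul top d a.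
Proof.
  intros Hba Hcb Hdc.
  destruct (Rlt_mulr_inv B a b Hba) as [u [Hu ->]].
  destruct (Rlt_mulr_inv B c d Hdc) as [x [Hx ->]].
  exact (Rlt_bi_ideal_mul a c x u Hx Hu Hcb).
Qed.

Lemma Rlt_bi_ideal_skip2 a b c :
  Rlt mul B b a -> Rlt mul B c b -> exists z, Rlt mul top z a.
Proof.
  intros Hba Hcb.
  destruct (Rlt_mulr_inv B a b Hba) as [u [Hu ->]].
  exists (mul c u); exact (Rlt_bi_ideal_mul a c u u Hu Hu Hcb).
Qed.

Lemma R_chain_bi_ideal_every_third m f :
  R_chain mul B (3 * m + 1) f -> R_chain mul top (S m) (fun i => f (3 * i)).
Proof.
  intros [_ Hlt]; split; [intros; exact I |].
  intros i Hi; replace (3 * S i) with (S (S (S (3 * i)))) by lia.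
  apply (Rlt_bi_ideal_skip3 _ (f (S (3 * i))) (f (S (S (3 * i)))));
    apply Hlt; lia.
Qed.

Lemma R_chain_bi_ideal_lift m f :
  R_chain mul B (3 * m + 3) f -> exists g, R_chain mul top (S (S m)) g.
Proof.
  intros Hf.
  destruct (Rlt_bi_ideal_skip2 (f (3 * m)) (f (S (3 * m))) (f (S (S (3 * m)))))
    as [z Hz]; [apply Hf; lia .. |].
  eexists; apply (R_chain_snoc _ _ (fun i => f (3 * i))); [| exact I | exact Hz].
  apply R_chain_bi_ideal_every_third, (R_chain_prefix _ _ (3 * m + 3)); auto; lia.
Qed.

End RChains.

Theorem corollary3p2 (T : Type) (mul : T -> T -> T) (Hassoc : assoc mul)
  (B : T -> Prop) (HB : bi_ideal mul B) (n : nat)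
  (HS : R_height mul (fun _ : T => True) n) :
  R_height_le mul B (3 * n - 1).
Proof.
  destruct HS as [HSle _].
  intros k f Hf.
  destruct (Nat.le_gt_cases k (3 * n - 1)) as [Hk | Hk]; [exact Hk | exfalso].
  destruct n as [| m].
  - assert (Hf1 : R_chain mul B (3 * 0 + 1) f)
      by (apply (R_chain_prefix _ _ _ _ k); [lia | exact Hf]).
    specialize (HSle _ _ (R_chain_bi_ideal_every_third T mul Hassoc B HB 0 f Hf1)).
    lia.
  - assert (Hf3 : R_chain mul B (3 * m + 3) f)
      by (apply (R_chain_prefix _ _ _ _ k); [lia | exact Hf]).
    destruct (R_chain_bi_ideal_lift T mul Hassoc B HB m f Hf3) as [g Hg].
    specialize (HSle _ _ Hg); lia.
Qed.
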